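(* Let $(X,d)$ be a bounded metric space and let $M: X\to\mathbb{R}$ satisfy $d(x,y)\le M(x)\le d(x,z)+M(z)$ for all $x,y,z\in X$. Let $d_S$ be the subset distance on $\mathcal{F}(X)$ defined in the context. For any $X_1,X_2\in\mathcal{F}(X)$ with $|X_1|\le|X_2|$, there exists an injection $\chi_0: X_1\to X_2$ such that $d_S(X_1,X_2)=d_{\chi_0}(X_1,X_2)$ and $\chi_0(x)=x$ for all $x\in X_1\cap X_2$.
   Context: $\mathcal{F}(X)$ denotes the set of all finite subsets of $X$. For $A,B\in\mathcal{F}(X)$ with $|A|\le|B|$ and an injection $\chi:A\to B$, define $d_\chi(A,B)=\sum_{x\in A} d(x,\chi(x))+\sum_{y\in B\setminus\chi(A)} M(y)$. The subset distance is $d_S(A,B)=d_S(B,A)=\min\{d_\chi(A,B) : \chi:A\to B \text{ an injection}\}$ (for $|A|\le|B|$). *)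

From HB Require Import structures.
From mathcomp Require Import all_boot all_order all_algebra.
From mathcomp Require Import finmap.
From mathcomp Require Import reals.
Set Implicit Arguments. Unset Strict Implicit. Unset Printing Implicit Defensive.
Import Order.TTheory GRing.Theory Num.Theory.
Local Open Scope ring_scope.


Definition is_metric (R : realType) (X : choiceType) (d : X -> X -> R) : Prop :=
  (forall x y, 0 <= d x y) /\ (forall x y, d x y = 0 <-> x = y) /\
  (forall x y, d x y = d y x) /\ (forall x y z, d x z <= d x y + d y z).

Definition metric_bounded (R : realType) (X : choiceType) (d : X -> X -> R) : Prop :=
  exists C : R, forall x y, d x y <= C.

Definition d_chi (R : realType) (X : choiceType) (d : X -> X -> R) (M : X -> R)
    (A B : {fset X}) (chi : A -> B) : R :=
  \sum_(x : A) d (val x) (val (chi x))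
  + \sum_(y : B | y \notin [seq chi x | x : A]) M (val y).

Definition inj_costs (R : realType) (X : choiceType) (d : X -> X -> R) (M : X -> R)
    (A B : {fset X}) : seq R :=
  [seq d_chi d M (fun x : A => (f : {ffun A -> B}) x) | f <- enum [pred f : {ffun A -> B} | injectiveb f]].

(* minimum of a seq of reals (its head when nonempty; 0 for the empty seq) *)
Definition seqmin (R : realType) (s : seq R) : R :=
  foldr Num.min (head 0 s) s.

Definition d_S (R : realType) (X : choiceType) (d : X -> X -> R) (M : X -> R)
    (A B : {fset X}) : R :=
  if (#|` A|%fset <= #|` B|%fset)%N then seqmin (inj_costs d M A B)
  else seqmin (inj_costs d M B A).

(* Start from an optimal injection and repair it one point of X1 ∩ X2 at a
time: if x is not sent to itself, compose with the transposition of chi x and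
x in X2.  If x was the image of some w, the cost changes by
d(w,chi x) - d(w,x) - d(x,chi x) <= 0 (triangle inequality); otherwise x
becomes matched and chi x unmatched, which changes the cost by
M(chi x) - M(x) - d(x,chi x) <= 0.  Each repair fixes x without unfixing
anything, so finitely many repairs give an optimal injection that is the
identity on X1 ∩ X2. *)
From mathcomp Require Import all_boot all_order all_algebra perm finmap reals lra.
Set Implicit Arguments. Unset Strict Implicit. Unset Printing Implicit Defensive.
Import Order.TTheory GRing.Theory Num.Theory.
Local Open Scope ring_scope.

Section SeqMin.
Variable R : realType.

Lemma seqmin_le (s : seq R) y : y \in s -> seqmin s <= y.
Proof.
rewrite /seqmin; move: (head 0 s) => x0.
elim: s => //= a s IH.
by rewrite in_cons ge_min => /orP [/eqP ->|/IH ->]; rewrite ?lexx ?orbT.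
Qed.

Lemma seqmin_mem (s : seq R) : s != [::] -> seqmin s \in s.
Proof.
case: s => // a s _; rewrite /seqmin /=.
have foldr_mem : foldr Num.min a s \in a :: s.
  elim: s => [|b s IH] /=; first exact: mem_head.
  rewrite minEle; case: ifP => _; first by rewrite !inE eqxx orbT.
  by move: IH; rewrite !inE => /orP [->|->]; rewrite ?orbT.
by rewrite minEle; case: ifP => _; rewrite ?mem_head.
Qed.

End SeqMin.

Lemma exists_injection (A B : finType) :
  (#|A| <= #|B|)%N -> exists f : A -> B, injective f.
Proof.
move=> leAB; exists (fun x => enum_val (widen_ord leAB (enum_rank x))).
by move=> x y /enum_val_inj [] /ord_inj /enum_rank_inj.
Qed.

Section SubsetDistance.
Variables (R : realType) (X : choiceType) (d : X -> X -> R) (M : X -> R).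
Variables (A B : {fset X}).

Lemma eq_d_chi (f g : A -> B) : f =1 g -> d_chi d M f = d_chi d M g.
Proof.
move=> fg; rewrite /d_chi (eq_image (B := predT) (frefl _) fg).
by congr (_ + _); apply: eq_bigr => x _; rewrite fg.
Qed.

Definition match_cost (x : A) (y : B) : R := d (val x) (val y) - M (val y).

Lemma d_chi_injE (f : A -> B) : injective f ->
  d_chi d M f = \sum_(x : A) match_cost x (f x) + \sum_(y : B) M (val y).
Proof.
move=> finj; rewrite /d_chi /match_cost sumrB -addrA; congr (_ + _).
rewrite [in RHS](bigID (mem [seq f x | x : A])) /=.
suff -> : \sum_(y : B | y \in [seq f x | x : A]) M (val y)
          = \sum_(x : A) M (val (f x)) by rewrite addKr.
rewrite -big_uniq /=; last by rewrite map_inj_uniq ?enum_uniq.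
by rewrite big_map big_enum.
Qed.

Lemma inj_costsP c :
  reflect (exists2 f : A -> B, injective f & c = d_chi d M f)
          (c \in inj_costs d M A B).
Proof.
apply: (iffP mapP) => [[f]|[f finj ->]].
  by rewrite mem_enum => /injectiveP finj ->; exists f.
exists (finfun f); last by apply: eq_d_chi => x; rewrite ffunE.
by rewrite mem_enum; apply/injectiveP => x y; rewrite !ffunE => /finj.
Qed.

Hypothesis leAB : (#|` A| <= #|` B|)%N.

Lemma d_S_le (f : A -> B) : injective f -> d_S d M A B <= d_chi d M f.
Proof.
by move=> finj; rewrite /d_S leAB; apply/seqmin_le/inj_costsP; exists f.
Qed.

Lemma d_S_attained :
  exists2 f : A -> B, injective f & d_S d M A B = d_chi d M f.
Proof.
rewrite /d_S leAB; apply/inj_costsP/seqmin_mem.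
have [f finj] : exists f : A -> B, injective f.
  by apply: exists_injection; rewrite -!cardfE.
have : d_chi d M f \in inj_costs d M A B by apply/inj_costsP; exists f.
by case: (inj_costs d M A B).
Qed.

End SubsetDistance.

Section FixIntersection.
Variables (R : realType) (X : choiceType) (d : X -> X -> R) (M : X -> R).
Hypothesis hd : is_metric d.
Hypothesis M_lipschitz : forall x z, M x <= d x z + M z.
Variables (A B : {fset X}).

Definition unfixed (f : A -> B) : pred A :=
  [pred x | (val x \in B) && (val (f x) != val x)].

Lemma d_chi_tperm (f : A -> B) (x : A) (b : B) :
  injective f -> val b = val x -> f x != b ->
  d_chi d M (tperm (f x) b \o f) <= d_chi d M f.
Proof.
move=> finj bx fxb; have [_ [d0P [dC dtri]]] := hd.
have dxx : d (val x) (val x) = 0 by apply/d0P.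
have tperm_inj : injective (tperm (f x) b \o f) by apply/inj_comp/finj/perm_inj.
rewrite !d_chi_injE // lerD2r (bigD1 x) //= [leRHS](bigD1 x) //= tpermL.
have unmoved (P : pred A) :
    (forall y, P y -> f y != b) -> (forall y, P y -> y != x) ->
    \sum_(y | P y) match_cost d M y (tperm (f x) b (f y))
    = \sum_(y | P y) match_cost d M y (f y).
  move=> Pb Px; apply: eq_bigr => y Py; rewrite tpermD //; last by rewrite eq_sym Pb.
  by apply: contra (Px y Py) => /eqP /finj ->.
have [w fwb|unmatched] := pickP (fun w => f w == b); last first.
  rewrite unmoved => [|y _|//]; last exact/negbT/unmatched.
  have := M_lipschitz (val (f x)) (val x); rewrite dC /match_cost bx dxx; lra.
have wx : w != x by apply: contra fxb => /eqP <-.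
move/eqP: fwb => fwb; rewrite (bigD1 w) //= [in leRHS](bigD1 w) //= fwb tpermR.
rewrite unmoved => [|y /andP [_ yw]|y /andP []//].
  by have := dtri (val w) (val x) (val (f x)); rewrite /match_cost bx dxx; lra.
by apply: contra yw; rewrite -fwb => /eqP /finj ->.
Qed.

Lemma unfixed_tperm (f : A -> B) (x : A) (xB : val x \in B) :
  injective f -> x \in unfixed f ->
  unfixed (tperm (f x) [` xB]%fset \o f) \proper unfixed f.
Proof.
move=> finj /[dup] xf; rewrite inE => /andP [_ fxx].
apply/properP; split; last first.
  by exists x => //; rewrite inE /= tpermL eqxx andbF.
apply/subsetP => y; rewrite !inE /= => /andP [yB]; rewrite yB /=.
case: tpermP => [fyx|fyb|_ _ //]; first by move/finj: fyx => ->; rewrite eqxx.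
move=> _; rewrite fyb /=; apply/eqP => /val_inj xy.
by move: fyb fxx; rewrite -xy => ->; rewrite eqxx.
Qed.

Lemma fix_intersection (f : A -> B) : injective f ->
  exists2 g : A -> B, injective g /\ d_chi d M g <= d_chi d M f
    & forall x, val x \in B -> val (g x) = val x.
Proof.
have [n] := ubnP #|unfixed f|; elim: n f => // n IH f ltfn finj.
have [x xf|fixed] := pickP (unfixed f); last first.
  exists f => [|x xB]; first by split; [|exact: lexx].
  by apply/eqP; have := fixed x; rewrite /unfixed /= xB => /negbFE.
have /andP [xB fxx] := xf.
set g := tperm (f x) [` xB]%fset \o f.
have ginj : injective g by apply/inj_comp/finj/perm_inj.
have fxb : f x != [` xB]%fset by apply: contra fxx => /eqP ->.
have ltgn : (#|unfixed g| < n)%N.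
  by rewrite -ltnS (leq_trans _ ltfn) // ltnS proper_card // unfixed_tperm.
have [h [hinj le_hg] hfix] := IH g ltgn ginj.
exists h; last exact: hfix.
split; first exact: hinj.
by apply: le_trans le_hg _; apply: d_chi_tperm.
Qed.

End FixIntersection.

Theorem lemma2p1 (R : realType) (X : choiceType) (d : X -> X -> R) (M : X -> R)
    (hd : is_metric d) (hb : metric_bounded d)
    (hM : forall x y z : X, d x y <= M x /\ M x <= d x z + M z)
    (X1 X2 : {fset X}) (hcard : (#|` X1|%fset <= #|` X2|%fset)%N) :
  exists chi0 : X1 -> X2,
    injective chi0 /\
    d_S d M X1 X2 = d_chi d M chi0 /\
    (forall x : X1, val x \in X2 -> val (chi0 x) = val x).
Proof.
have M_lipschitz x z : M x <= d x z + M z by have [_] := hM x x z.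
have [f finj f_opt] := d_S_attained d M hcard.
have [g [ginj le_gf] gfix] := fix_intersection hd M_lipschitz finj.
exists g; split; first exact: ginj.
split; last exact: gfix.
by apply/le_anti; rewrite d_S_le //= f_opt le_gf.
Qed.
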